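(* Let $R$ be a transit function on a non-empty finite set $V$ satisfying axioms $(b2)$ and $(b3)$. Then for any $u,v,w\in V$ there exists $x\in R(u,v)\cap R(u,w)$ such that $R(x,v)\cap R(x,w)=\{x\}$.
   Context: A transit function on $V$ is a map $R:V\times V\to 2^V$ with $(t1)$ $u\in R(u,v)$, $(t2)$ $R(u,v)=R(v,u)$, $(t3)$ $R(u,u)=\{u\}$ for all $u,v\in V$. $(b2)$: if $x\in R(u,v)$ and $y\in R(u,x)$ then $y\in R(u,v)$. $(b3)$: if $x\in R(u,v)$ and $y\in R(u,x)$ then $x\in R(y,v)$. *)

From mathcomp Require Import all_boot.
Set Implicit Arguments. Unset Strict Implicit. Unset Printing Implicit Defensive.

Definition transit_function (V : finType) (R : V -> V -> {set V}) : Prop :=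
  [/\ (forall u v : V, u \in R u v),
      (forall u v : V, R u v = R v u)
    & (forall u : V, R u u = [set u])].

Definition axiom_b2 (V : finType) (R : V -> V -> {set V}) : Prop :=
  forall u v x y : V, x \in R u v -> y \in R u x -> y \in R u v.

Definition axiom_b3 (V : finType) (R : V -> V -> {set V}) : Prop :=
  forall u v x y : V, x \in R u v -> y \in R u x -> x \in R y v.

From mathcomp Require Import all_boot.

(* Take x in R(u,v) :&: R(u,w) with #|R(x,v)| minimal.  By (b2), R(x,v) and
   R(x,w) lie inside R(u,v) and R(u,w), so any y in R(x,v) :&: R(x,w) is again
   a candidate; by (b3), y <> x would make R(y,v) a proper subset of R(x,v),
   contradicting minimality. *)

Section TransitIntervals.

Context {V : finType} {R : V -> V -> {set V}}.
Hypotheses (R_refl : forall u v, u \in R u v) (RC : forall u v, R u v = R v u).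
Hypotheses (R_id : forall u, R u u = [set u]) (b2 : axiom_b2 R) (b3 : axiom_b3 R).

Lemma subset_transit {x y v} : y \in R x v -> R y v \subset R x v.
Proof.
move=> yRxv; apply/subsetP => z; rewrite ![R _ v]RC => zRvy.
by apply: b2 zRvy; rewrite RC.
Qed.

Lemma transit_antisym {x y v} : y \in R x v -> x \in R y v -> y = x.
Proof.
rewrite ![R _ v]RC => yRvx xRvy.
by apply/set1P; rewrite -R_id; apply: b3 xRvy.
Qed.

Lemma proper_transit {x y v} : y \in R x v -> y != x -> R y v \proper R x v.
Proof.
move=> yRxv y_neq_x; apply/properP; split; first exact: subset_transit.
exists x; first exact: R_refl.
by apply/negP => xRyv; case/eqP: y_neq_x; apply: transit_antisym xRyv.
Qed.

End TransitIntervals.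

Theorem lemma3 (V : finType) (R : V -> V -> {set V}) :
  0 < #|V| ->
  transit_function R -> axiom_b2 R -> axiom_b3 R ->
  forall u v w : V, exists x : V,
    x \in R u v :&: R u w /\ R x v :&: R x w = [set x].
Proof.
move=> _ [R_refl RC R_id] b2 b3 u v w.
have uRuvw : u \in R u v :&: R u w by rewrite inE !R_refl.
have [x xRuvw x_min] :=
  @arg_minnP _ u (mem (R u v :&: R u w)) (fun x => #|R x v|) uRuvw.
exists x; split => //; have /setIP[xRuv xRuw] := xRuvw.
apply/eqP; rewrite eqEsubset sub1set !inE !R_refl !andbT.
apply/subsetP => y /setIP[yRxv yRxw]; rewrite in_set1.
apply/negPn/negP => y_neq_x.
have yRuvw : y \in R u v :&: R u w.
  have [/subsetP Rxv_sub /subsetP Rxw_sub] :=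
    (subset_transit RC b2 xRuv, subset_transit RC b2 xRuw).
  by rewrite inE Rxv_sub ?Rxw_sub.
have := proper_card (proper_transit R_refl RC R_id b2 b3 yRxv y_neq_x).
by rewrite ltnNge x_min.
Qed.
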